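(* The adelic absolute value $a\mapsto\|a\|:=|a_\infty|\prod_{p\in\mathcal{P}}p^{-v_p(a)}$ is an upper semi-continuous function on the ring $\mathcal{A}$ of adeles of $\mathbb{Q}$.
   Context: $\mathcal{P}$ is the set of primes. $\mathcal{A}=\mathcal{A}_f\times\mathbb{R}$ with $\mathcal{A}_f=\{(a_p)\in\prod_p\mathbb{Q}_p: a_p\in\mathbb{Z}_p\text{ for almost all }p\}$ in the restricted product topology, and $\mathcal{A}$ has the product topology; $a=((a_p)_p,a_\infty)$. $v_p(a):=v_p(a_p)\in\mathbb{Z}\cup\{\infty\}$ is the $p$-adic valuation, with $p^{-\infty}=0$; the infinite product is interpreted as the limit over finite subsets of primes (it is $0$ if some $a_p=0$ or $v_p(a)>0$ for infinitely many $p$). *)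

From Stdlib Require Import Reals ZArith List Znumtheory ClassicalEpsilon Rtopology.
Open Scope R_scope.

(** * The p-adic numbers Q_p, modelled by their (Hensel) digit expansions.
    An element of Q_p is x = sum_{n >= N} d_n p^n with digits 0 <= d_n < p,
    represented as the digit function d : Z -> Z (d n = 0 for n below some N).
    This representation is a bijection onto Q_p. *)
Definition is_Qp (p : Z) (x : Z -> Z) : Prop :=
  (forall n, (0 <= x n < p)%Z) /\ exists N, forall n, (n < N)%Z -> x n = 0%Z.

Definition in_Zp (x : Z -> Z) : Prop := forall n, (n < 0)%Z -> x n = 0%Z.

Definition Qp_zero (x : Z -> Z) : Prop := forall n, x n = 0%Z.

(** p-adic valuation (for x <> 0): the least index of a nonzero digit.
    (For x = 0 the value is irrelevant: v_p = +oo is handled in [padic_factor].) *)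
Definition vp (x : Z -> Z) : Z :=
  epsilon (inhabits 0%Z) (fun v => x v <> 0%Z /\ forall n, (n < v)%Z -> x n = 0%Z).

(** p-adic topology: U (a subset of Q_p) is open iff around each of its points it
    contains a ball  { y | y = x mod p^k Z_p }, i.e. { y | digits of y and x agree below k }. *)
Definition open_Qp (p : Z) (U : (Z -> Z) -> Prop) : Prop :=
  forall x, is_Qp p x -> U x ->
    exists k : Z, forall y, is_Qp p y -> (forall n, (n < k)%Z -> y n = x n) -> U y.

(** * Adeles of Q: A = A_f x R.  [af a p] is the p-component (for prime p);
    components at non-primes are fixed to 0 (junk). *)
Record adele := Adele {
  af : Z -> (Z -> Z);
  ainf : R;
  af_Qp : forall p, prime p -> is_Qp p (af p);
  af_junk : forall p, ~ prime p -> forall n, af p n = 0%Z;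
  af_restricted : exists B : Z, forall p, prime p -> (B < p)%Z -> in_Zp (af p)
}.

(** Restricted product topology on A_f, product with the usual topology on R:
    basic opens are  prod_{p in S} U_p x prod_{p notin S} Z_p x W,
    S finite set of primes, U_p open in Q_p, W open in R. *)
Definition in_box (S : list Z) (V : Z -> (Z -> Z) -> Prop) (W : R -> Prop) (b : adele) : Prop :=
  (forall p, In p S -> V p (af b p)) /\
  (forall p, prime p -> ~ In p S -> in_Zp (af b p)) /\
  W (ainf b).

Definition open_adele (U : adele -> Prop) : Prop :=
  forall a, U a ->
    exists (S : list Z) (V : Z -> (Z -> Z) -> Prop) (W : R -> Prop),
      (forall p, In p S -> prime p /\ open_Qp p (V p)) /\
      open_set W /\
      in_box S V W a /\
      (forall b, in_box S V W b -> U b).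

Definition padic_factor (a : adele) (p : Z) : R :=
  if excluded_middle_informative (Qp_zero (af a p)) then 0
  else powerRZ (IZR p) (- vp (af a p)).

Definition partial_prod (a : adele) (S : list Z) : R :=
  fold_right (fun p r => padic_factor a p * r) 1 S.

Definition prod_limit (a : adele) (r : R) : Prop :=
  forall eps, 0 < eps ->
    exists S0 : list Z, (forall p, In p S0 -> prime p) /\
      forall S : list Z, NoDup S -> (forall p, In p S -> prime p) -> incl S0 S ->
        Rabs (partial_prod a S - r) < eps.

Definition adelic_norm (a : adele) : R :=
  Rabs (ainf a) * epsilon (inhabits 0) (prod_limit a).

Definition upper_semicontinuous_adele (f : adele -> R) : Prop :=
  forall c : R, open_adele (fun a => f a < c).

From Stdlib Require Import Reals ZArith List Znumtheory ClassicalEpsilon Rtopology.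
From Stdlib Require Import Lra Lia Classical Wf_nat.
Open Scope R_scope.

(* The p-adic absolute value is upper semi-continuous: if y agrees with x to
   precision p^k then |y|_p <= |x|_p + p^-k.  As |a_p|_p <= 1 for all p outside
   a finite set S_a of primes, the finite partial products decrease once they
   contain S_a, so the infinite product is their infimum over such sets.  For
   ||a|| < c, one finite set S with |a_oo| prod_{p in S} |a_p|_p < c already
   suffices: on the box fixing many digits of a_p for p in S, asking b_p in Z_p
   for p outside S and |b_oo| close to |a_oo|, this finite product stays below c
   and bounds ||b|| from above. *)

Lemma powerRZ_opp_le (x : R) (k v : Z) : 1 <= x -> (k <= v)%Z ->
  powerRZ x (- v) <= powerRZ x (- k).
Proof.
  intros Hx Hkv.
  replace (- k)%Z with (- v + Z.of_nat (Z.to_nat (v - k)))%Z by lia.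
  rewrite powerRZ_add, <- pow_powerRZ by lra.
  assert (0 < powerRZ x (- v)) by (apply powerRZ_lt; lra).
  assert (1 <= x ^ Z.to_nat (v - k)) by (apply pow_R1_Rle; lra).
  nra.
Qed.

Lemma powerRZ_opp_small (e : R) : 0 < e ->
  exists k : Z, forall x, 2 <= x -> powerRZ x (- k) <= e.
Proof.
  intros He.
  destruct (archimed_cor1 e He) as [N [HN HN0]].
  exists (Z.of_nat N). intros x Hx.
  rewrite powerRZ_neg', <- pow_powerRZ.
  assert (HNpos : 0 < INR N) by (apply lt_0_INR; lia).
  assert (1 + INR N * 1 <= 2 ^ N) by (replace 2 with (1 + 1) by ring; apply poly; lra).
  assert (2 ^ N <= x ^ N) by (apply pow_incr; lra).
  assert (/ x ^ N <= / INR N) by (apply Rinv_le_contravar; lra).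
  lra.
Qed.

Lemma open_set_Rabs_lt r : open_set (fun t => Rabs t < r).
Proof.
  intros x Hx.
  assert (Hpos : 0 < r - Rabs x) by lra.
  exists (mkposreal _ Hpos). intros y Hy. unfold disc in Hy. simpl in Hy.
  pose proof (Rabs_triang_inv y x). lra.
Qed.

Lemma vp_exists p x : is_Qp p x -> ~ Qp_zero x ->
  exists v, x v <> 0%Z /\ forall n, (n < v)%Z -> x n = 0%Z.
Proof.
  intros [_ [N HN]] Hx.
  assert (Hnz : exists m, x (N + Z.of_nat m)%Z <> 0%Z).
  { apply not_all_ex_not. intros H0. apply Hx. intros n.
    destruct (Z.lt_ge_cases n N); [now apply HN|].
    replace n with (N + Z.of_nat (Z.to_nat (n - N)))%Z by lia. apply H0. }
  destruct (dec_inh_nat_subset_has_unique_least_element _ (fun m => classic _) Hnz)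
    as [m [[Hm Hleast] _]].
  exists (N + Z.of_nat m)%Z. split; [exact Hm|].
  intros n Hn. destruct (Z.lt_ge_cases n N); [now apply HN|].
  apply NNPP. intros Hn0.
  specialize (Hleast (Z.to_nat (n - N))).
  replace (N + Z.of_nat (Z.to_nat (n - N)))%Z with n in Hleast by lia.
  specialize (Hleast Hn0). lia.
Qed.

Lemma vp_spec p x : is_Qp p x -> ~ Qp_zero x ->
  x (vp x) <> 0%Z /\ forall n, (n < vp x)%Z -> x n = 0%Z.
Proof. intros Hx Hx0. unfold vp. apply epsilon_spec. exact (vp_exists p x Hx Hx0). Qed.

Lemma vp_unique p x v : is_Qp p x -> x v <> 0%Z ->
  (forall n, (n < v)%Z -> x n = 0%Z) -> vp x = v.
Proof.
  intros Hx Hv Hbelow.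
  assert (Hx0 : ~ Qp_zero x) by (intros Hz; apply Hv, Hz).
  destruct (vp_spec p x Hx Hx0) as [Hvp Hbelow'].
  destruct (Z.lt_total (vp x) v) as [Hlt|[Heq|Hgt]]; [|exact Heq|].
  - contradiction (Hvp (Hbelow _ Hlt)).
  - contradiction (Hv (Hbelow' _ Hgt)).
Qed.

Definition padic_abs (p : Z) (x : Z -> Z) : R :=
  if excluded_middle_informative (Qp_zero x) then 0 else powerRZ (IZR p) (- vp x).

Lemma padic_abs_nonneg p x : (0 < p)%Z -> 0 <= padic_abs p x.
Proof.
  intros Hp. unfold padic_abs.
  destruct excluded_middle_informative; [lra|].
  apply powerRZ_le, IZR_lt, Hp.
Qed.

Lemma padic_abs_le_1 p x : (0 < p)%Z -> is_Qp p x -> in_Zp x -> padic_abs p x <= 1.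
Proof.
  intros Hp Hx Hint. unfold padic_abs.
  destruct excluded_middle_informative as [|Hx0]; [lra|].
  destruct (vp_spec p x Hx Hx0) as [Hv _].
  assert (0 <= vp x)%Z by (apply Z.nlt_ge; intros Hneg; apply Hv, Hint, Hneg).
  apply (powerRZ_opp_le (IZR p) 0 (vp x)); [apply IZR_le; lia | assumption].
Qed.

(* Either v_p(y) >= k, or y and x share their leading digit and v_p(y) = v_p(x). *)
Lemma padic_abs_agree_le p x y k : (0 < p)%Z -> is_Qp p x -> is_Qp p y ->
  (forall n, (n < k)%Z -> y n = x n) ->
  padic_abs p y <= padic_abs p x + powerRZ (IZR p) (- k).
Proof.
  intros Hp Hx Hy Hxy.
  assert (Hp1 : 1 <= IZR p) by (apply IZR_le; lia).
  pose proof (powerRZ_le (IZR p) (- k) ltac:(lra)).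
  pose proof (padic_abs_nonneg p x Hp).
  unfold padic_abs at 1.
  destruct excluded_middle_informative as [|Hy0]; [lra|].
  destruct (vp_spec p y Hy Hy0) as [Hv Hbelow].
  destruct (Z.lt_ge_cases (vp y) k) as [Hlt|Hge].
  - assert (Hvx : vp x = vp y).
    { apply (vp_unique p); [exact Hx| |].
      - rewrite <- Hxy by exact Hlt. exact Hv.
      - intros n Hn. rewrite <- Hxy by lia. auto. }
    unfold padic_abs. destruct excluded_middle_informative as [Hx0|].
    + contradiction Hv. rewrite Hxy by exact Hlt. apply Hx0.
    + rewrite Hvx. lra.
  - pose proof (powerRZ_opp_le (IZR p) k (vp y) Hp1 Hge). lra.
Qed.

Lemma open_Qp_agree p x k : open_Qp p (fun y => forall n, (n < k)%Z -> y n = x n).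
Proof.
  intros y _ Hy. exists k. intros z _ Hz n Hn. rewrite Hz, Hy; auto.
Qed.

Lemma Rmult_lt_perturb x y c : 0 <= x -> 0 <= y -> x * y < c ->
  exists d, 0 < d /\ forall x' y', 0 <= x' <= x + d -> 0 <= y' <= y + d -> x' * y' < c.
Proof.
  intros Hx Hy Hc.
  set (e := (c - x * y) / (x + y + 2)).
  assert (He : e * (x + y + 2) = c - x * y) by (unfold e; field; lra).
  assert (He0 : 0 < e) by (unfold e; apply Rdiv_lt_0_compat; lra).
  assert (Hd : 0 < Rmin 1 e) by (apply Rmin_glb_lt; lra).
  exists (Rmin 1 e). split; [exact Hd|].
  intros x' y' Hx' Hy'.
  pose proof (Rmin_l 1 e). pose proof (Rmin_r 1 e).
  set (d := Rmin 1 e) in *.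
  assert (x' * y' <= (x + d) * (y + d)) by (apply Rmult_le_compat; lra).
  assert (d * (x + y + 2) <= e * (x + y + 2)) by (apply Rmult_le_compat_r; lra).
  assert (d * d <= d * 1) by (apply Rmult_le_compat_l; lra).
  nra.
Qed.

Lemma incl_nodup_app_l {A : Type} (dec : forall x y : A, {x = y} + {x <> y}) l1 l2 :
  incl l1 (nodup dec (l1 ++ l2)).
Proof. intros x Hx. apply nodup_In, in_or_app. auto. Qed.

Lemma incl_nodup_app_r {A : Type} (dec : forall x y : A, {x = y} + {x <> y}) l1 l2 :
  incl l2 (nodup dec (l1 ++ l2)).
Proof. intros x Hx. apply nodup_In, in_or_app. auto. Qed.

Section ListProduct.
Context {I : Type}.

Definition prodl (f : I -> R) (S : list I) : R := fold_right (fun i r => f i * r) 1 S.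

Lemma prodl_nonneg f S : (forall i, In i S -> 0 <= f i) -> 0 <= prodl f S.
Proof.
  induction S as [|i S IH]; simpl; intros Hf; [lra|].
  apply Rmult_le_pos; auto.
Qed.

Lemma prodl_le_1 f S : (forall i, In i S -> 0 <= f i <= 1) -> prodl f S <= 1.
Proof.
  induction S as [|i S IH]; simpl; intros Hf; [lra|].
  assert (0 <= prodl f S) by (apply prodl_nonneg; intros; apply Hf; auto).
  assert (prodl f S <= 1) by (apply IH; auto).
  destruct (Hf i); auto. nra.
Qed.

Lemma prodl_app_cons f l1 i l2 : prodl f (l1 ++ i :: l2) = f i * prodl f (l1 ++ l2).
Proof. induction l1 as [|j l1 IH]; simpl; [reflexivity|]. rewrite IH. ring. Qed.

Lemma prodl_incl_le f S S' : NoDup S -> NoDup S' -> incl S S' ->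
  (forall i, In i S' -> 0 <= f i) -> (forall i, In i S' -> ~ In i S -> f i <= 1) ->
  prodl f S' <= prodl f S.
Proof.
  revert S'. induction S as [|i S IH]; intros S' HS HS' Hincl Hpos Hle1.
  - apply prodl_le_1. intros j Hj. auto.
  - destruct (in_split i S') as [l1 [l2 ->]]; [apply Hincl; left; auto|].
    rewrite prodl_app_cons. simpl.
    apply NoDup_cons_iff in HS as [HiS HS].
    pose proof (NoDup_remove_2 _ _ _ HS') as Hil.
    apply Rmult_le_compat_l; [apply Hpos, in_or_app; simpl; auto|].
    apply IH; [exact HS | exact (NoDup_remove_1 _ _ _ HS') | | |].
    + intros j Hj. assert (Hj' : In j (l1 ++ i :: l2)) by (apply Hincl; right; exact Hj).
      apply in_app_or in Hj' as [|[->|]]; [apply in_or_app; auto|contradiction|].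
      apply in_or_app; auto.
    + intros j Hj. apply Hpos. apply in_app_or in Hj as [|]; apply in_or_app; simpl; auto.
    + intros j Hj Hnj. apply Hle1.
      * apply in_app_or in Hj as [|]; apply in_or_app; simpl; auto.
      * intros [->|]; [exact (Hil Hj)|contradiction].
Qed.

Lemma prodl_lt_perturb f S c : (forall i, In i S -> 0 <= f i) -> prodl f S < c ->
  exists d, 0 < d /\
    forall g, (forall i, In i S -> 0 <= g i <= f i + d) -> prodl g S < c.
Proof.
  revert c. induction S as [|i S IH]; simpl; intros c Hf Hc.
  - exists 1. split; [lra|]. intros. exact Hc.
  - assert (HfS : forall j, In j S -> 0 <= f j) by auto.
    destruct (Rmult_lt_perturb _ _ _ (Hf i (or_introl eq_refl)) (prodl_nonneg f S HfS) Hc)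
      as [d1 [Hd1 Hmul]].
    destruct (IH (prodl f S + d1) HfS ltac:(lra)) as [d2 [Hd2 Htail]].
    exists (Rmin d1 d2). split; [apply Rmin_glb_lt; auto|].
    intros g Hg. pose proof (Rmin_l d1 d2). pose proof (Rmin_r d1 d2).
    destruct (Hg i (or_introl eq_refl)).
    assert (prodl g S < prodl f S + d1).
    { apply Htail. intros j Hj. destruct (Hg j (or_intror Hj)). split; lra. }
    assert (0 <= prodl g S) by (apply prodl_nonneg; intros j Hj; apply Hg; auto).
    apply Hmul; lra.
Qed.

End ListProduct.

Definition covering (a : adele) (S : list Z) : Prop :=
  NoDup S /\ (forall p, In p S -> prime p) /\
  (forall p, prime p -> ~ In p S -> in_Zp (af a p)).

Lemma padic_factor_nonneg a p : prime p -> 0 <= padic_factor a p.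
Proof. intros Hp. apply (padic_abs_nonneg p), (Z.lt_trans _ 1); [lia | apply Hp]. Qed.

Lemma padic_factor_agree_le a b p k : prime p ->
  (forall n, (n < k)%Z -> af b p n = af a p n) ->
  padic_factor b p <= padic_factor a p + powerRZ (IZR p) (- k).
Proof.
  intros Hp Hagree. apply (padic_abs_agree_le p); auto using af_Qp.
  apply (Z.lt_trans _ 1); [lia | apply Hp].
Qed.

Lemma partial_prod_nonneg a S : (forall p, In p S -> prime p) -> 0 <= partial_prod a S.
Proof. intros HS. apply (prodl_nonneg (padic_factor a)). auto using padic_factor_nonneg. Qed.

Lemma covering_exists a : exists S, covering a S.
Proof.
  destruct (af_restricted a) as [B HB].
  exists (nodup Z.eq_dec (filter (fun p => if prime_dec p then true else false)
                          (map Z.of_nat (seq 0 (S (Z.to_nat B)))))).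
  split; [apply NoDup_nodup|split].
  - intros p Hp. apply nodup_In, filter_In in Hp as [_ Hp].
    destruct prime_dec; [assumption|discriminate].
  - intros p Hp Hout. apply HB; [exact Hp|].
    apply Z.nle_gt. intros HpB. apply Hout.
    pose proof (prime_ge_2 p Hp).
    apply nodup_In, filter_In. split.
    + apply in_map_iff. exists (Z.to_nat p). split; [lia|]. apply in_seq. lia.
    + destruct prime_dec; [reflexivity|contradiction].
Qed.

Lemma covering_incl a S S' : covering a S -> NoDup S' -> (forall p, In p S' -> prime p) ->
  incl S S' -> covering a S'.
Proof.
  intros [_ [_ Hint]] HS' Hprime Hincl. split; [exact HS'|split; [exact Hprime|]].
  intros p Hp Hout. apply Hint; auto.
Qed.

Lemma covering_nodup_app a S0 S : (forall p, In p S0 -> prime p) -> covering a S ->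
  covering a (nodup Z.eq_dec (S0 ++ S)).
Proof.
  intros HS0 HS. apply (covering_incl a S); [exact HS|apply NoDup_nodup| |].
  - intros p Hp. apply nodup_In, in_app_or in Hp as [|]; [auto|apply HS; auto].
  - apply incl_nodup_app_r.
Qed.

Lemma partial_prod_incl_le a S S' : covering a S -> NoDup S' ->
  (forall p, In p S' -> prime p) -> incl S S' -> partial_prod a S' <= partial_prod a S.
Proof.
  intros [HS [_ Hint]] HS' Hprime Hincl.
  apply (prodl_incl_le (padic_factor a)); auto using padic_factor_nonneg.
  intros p Hp Hout. apply (padic_abs_le_1 p).
  - apply (Z.lt_trans _ 1); [lia|apply Hprime, Hp].
  - apply af_Qp, Hprime, Hp.
  - apply Hint; auto.
Qed.

Definition partial_prod_inf (a : adele) (r : R) : Prop :=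
  (forall S, covering a S -> r <= partial_prod a S) /\
  (forall eps, 0 < eps -> exists S, covering a S /\ partial_prod a S < r + eps).

Lemma partial_prod_inf_exists a : exists r, partial_prod_inf a r.
Proof.
  set (E := fun x => exists S, covering a S /\ x = - partial_prod a S).
  assert (Hbound : bound E).
  { exists 0. intros x [S [[_ [HS _]] ->]]. pose proof (partial_prod_nonneg a S HS). lra. }
  destruct (covering_exists a) as [C HC].
  destruct (completeness E Hbound) as [m [Hub Hlub]]; [exists (- partial_prod a C); exists C; auto|].
  exists (- m). split.
  - intros S HS. assert (- partial_prod a S <= m) by (apply Hub; exists S; auto). lra.
  - intros eps Heps. apply NNPP. intros Hnone.
    assert (m <= m - eps); [|lra].
    apply Hlub. intros x [S [HS ->]].
    apply Rnot_lt_le. intros Hlt. apply Hnone. exists S. split; [exact HS|lra].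
Qed.

Lemma prod_limit_iff_inf a r : prod_limit a r <-> partial_prod_inf a r.
Proof.
  split.
  - intros Hlim. split.
    + intros S HS. apply Rnot_lt_le. intros Hlt.
      destruct (Hlim (r - partial_prod a S)) as [S0 [HS0 Hclose]]; [lra|].
      destruct (covering_nodup_app a S0 S HS0 HS) as [HS' [HS'prime _]].
      pose proof (Hclose _ HS' HS'prime (incl_nodup_app_l _ S0 S)) as Habs.
      pose proof (partial_prod_incl_le a S _ HS HS' HS'prime (incl_nodup_app_r _ S0 S)).
      apply Rabs_def2 in Habs. lra.
    + intros eps Heps.
      destruct (Hlim eps Heps) as [S0 [HS0 Hclose]].
      destruct (covering_exists a) as [C HC].
      pose proof (covering_nodup_app a S0 C HS0 HC) as HS.
      exists (nodup Z.eq_dec (S0 ++ C)). split; [exact HS|].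
      pose proof (Hclose _ (proj1 HS) (proj1 (proj2 HS)) (incl_nodup_app_l _ S0 C)) as Habs.
      apply Rabs_def2 in Habs. lra.
  - intros [Hlow Happrox] eps Heps.
    destruct (Happrox eps Heps) as [S1 [HS1 Hlt]].
    exists S1. split; [apply HS1|].
    intros S HS Hprime Hincl.
    pose proof (Hlow S (covering_incl a S1 S HS1 HS Hprime Hincl)).
    pose proof (partial_prod_incl_le a S1 S HS1 HS Hprime Hincl).
    apply Rabs_def1; lra.
Qed.

Definition padic_product (a : adele) : R := epsilon (inhabits 0) (prod_limit a).

Lemma padic_product_inf a : partial_prod_inf a (padic_product a).
Proof.
  apply prod_limit_iff_inf. unfold padic_product. apply epsilon_spec.
  destruct (partial_prod_inf_exists a) as [r Hr].
  exists r. apply prod_limit_iff_inf, Hr.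
Qed.

Lemma padic_product_nonneg a : 0 <= padic_product a.
Proof.
  apply Rnot_lt_le. intros Hneg.
  destruct (proj2 (padic_product_inf a) (- padic_product a)) as [S [[_ [HS _]] Hlt]]; [lra|].
  pose proof (partial_prod_nonneg a S HS). lra.
Qed.

Theorem lemma3p5 : upper_semicontinuous_adele adelic_norm.
Proof.
  intros c a Ha. change (Rabs (ainf a) * padic_product a < c) in Ha.
  destruct (Rmult_lt_perturb _ _ _ (Rabs_pos (ainf a)) (padic_product_nonneg a) Ha)
    as [d [Hd Hmul]].
  destruct (proj2 (padic_product_inf a) d Hd) as [S [HS HSa]].
  destruct (prodl_lt_perturb (padic_factor a) S _
              (fun p Hp => padic_factor_nonneg a p (proj1 (proj2 HS) p Hp)) HSa)
    as [e [He Hprod]].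
  destruct (powerRZ_opp_small e He) as [k Hk].
  exists S, (fun p y => forall n, (n < k)%Z -> y n = af a p n),
    (fun t => Rabs t < Rabs (ainf a) + d).
  split; [|split; [apply open_set_Rabs_lt|split]].
  - intros p Hp. split; [apply HS, Hp|apply open_Qp_agree].
  - split; [auto|split; [apply HS|lra]].
  - intros b [Hagree [Hint Hinf]]. change (Rabs (ainf b) * padic_product b < c).
    assert (Hb : partial_prod b S < padic_product a + d).
    { apply Hprod. intros p Hp.
      assert (Hprime : prime p) by (apply HS, Hp).
      pose proof (prime_ge_2 p Hprime).
      pose proof (padic_factor_agree_le a b p k Hprime (Hagree p Hp)).
      pose proof (Hk (IZR p) ltac:(apply IZR_le; lia)).
      pose proof (padic_factor_nonneg b p Hprime). lra. }
    assert (HbS : covering b S) by (split; [apply HS|split; [apply HS|exact Hint]]).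
    apply Rle_lt_trans with (Rabs (ainf b) * partial_prod b S).
    + apply Rmult_le_compat_l; [apply Rabs_pos|exact (proj1 (padic_product_inf b) S HbS)].
    + pose proof (partial_prod_nonneg b S (proj1 (proj2 HS))).
      pose proof (Rabs_pos (ainf b)).
      apply Hmul; lra.
Qed.
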